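(* Fix integers $n_0\le m\le n\le L-3$. Let $\sigma\in\Omega_L$ be a configuration with exactly $nm+1$ spins equal to $0$ and all other spins equal to $-1$, such that $nm$ of the $0$-spins form an $n\times m$ rectangle $Q$ and the remaining $0$-spin sits at a site $z\notin Q$ whose unique nearest neighbour in $Q$ is a corner of $Q$ (so that exactly one $-1$-spin has two $0$-spins as nearest neighbours). Let $\sigma_-$ be obtained from $\sigma$ by flipping the spin at $z$ to $-1$, and $\sigma_+$ by flipping to $0$ the unique $-1$-spin having two $0$-spins as neighbours. Then there exists a constant $C_0$ (depending only on $h$) such that $$\big|p_\beta(\sigma,\sigma_-)-\tfrac12\big|\le C_0\,\delta_1(\beta),\qquad \big|p_\beta(\sigma,\sigma_+)-\tfrac12\big|\le C_0\,\delta_1(\beta),$$ where $\delta_1(\beta)=e^{-h\beta}+|\Lambda_L|^{1/2}e^{-(2-h)\beta}+|\Lambda_L|e^{-(4-h)\beta}$.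
   Context: Blume–Capel model. Fix $h\in(0,1)$ with $2/h\notin\mathbb Z$, $n_0=\lfloor 2/h\rfloor$. $\Lambda_L$ is the two-dimensional discrete torus of side $L$, $\Omega_L=\{-1,0,1\}^{\Lambda_L}$. Hamiltonian $\mathbb H(\sigma)=\sum(\sigma(y)-\sigma(x))^2-h\sum_x\sigma(x)$, first sum over unordered nearest-neighbour pairs. $\sigma^{x,\pm}$: replace $\sigma(x)$ by $\sigma(x)\pm1$ modulo $3$ in $\{-1,0,1\}$. Jump rates $R_\beta(\sigma,\sigma^{x,\pm})=\exp\{-\beta[\mathbb H(\sigma^{x,\pm})-\mathbb H(\sigma)]_+\}$, holding rate $\lambda_\beta(\sigma)=\sum_{x,\pm}R_\beta(\sigma,\sigma^{x,\pm})$, and jump probabilities $p_\beta(\sigma,\sigma')=R_\beta(\sigma,\sigma')/\lambda_\beta(\sigma)$. *)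

From Stdlib Require Import Reals Lra Lia ZArith Arith List.
Import ListNotations.
Open Scope R_scope.

Definition site := (nat * nat)%type.
Definition sites (L : nat) : list site := list_prod (seq 0 L) (seq 0 L).

(* A configuration assigns a spin (an integer in {-1,0,1}) to each site;
   only its values on [sites L] matter. *)
Definition config := site -> Z.

Definition nbrs (L : nat) (x : site) : list site :=
  let (i, j) := x in
  [ (((i + 1) mod L)%nat, j); (((i + L - 1) mod L)%nat, j);
    (i, ((j + 1) mod L)%nat); (i, ((j + L - 1) mod L)%nat) ].

Definition adj (L : nat) (x y : site) : Prop := In y (nbrs L x).

Definition sumL (L : nat) (f : site -> R) : R :=
  fold_right Rplus 0 (map f (sites L)).

(* H(sigma) = sum over unordered n.n. pairs (sigma(y)-sigma(x))^2 - h sum_x sigma(x);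
   each unordered pair {x, x+e1}, {x, x+e2} is counted once. *)
Definition Ham (L : nat) (h : R) (s : config) : R :=
  sumL L (fun x =>
    let (i, j) := x in
    IZR ((s (((i + 1) mod L)%nat, j) - s (i, j)) ^ 2)%Z
    + IZR ((s (i, ((j + 1) mod L)%nat) - s (i, j)) ^ 2)%Z
    - h * IZR (s (i, j))).

(* sigma(x) +/- 1 modulo 3 in {-1,0,1}. *)
Definition spin_up (v : Z) : Z := if Z.eqb v 1 then (-1)%Z else (v + 1)%Z.
Definition spin_down (v : Z) : Z := if Z.eqb v (-1) then 1%Z else (v - 1)%Z.

Definition site_eqb (x y : site) : bool :=
  Nat.eqb (fst x) (fst y) && Nat.eqb (snd x) (snd y).

Definition update (s : config) (x : site) (v : Z) : config :=
  fun y => if site_eqb y x then v else s y.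

Definition flip_plus (s : config) (x : site) : config := update s x (spin_up (s x)).
Definition flip_minus (s : config) (x : site) : config := update s x (spin_down (s x)).

Definition rate (L : nat) (h beta : R) (s s' : config) : R :=
  exp (- beta * Rmax 0 (Ham L h s' - Ham L h s)).

Definition hold_rate (L : nat) (h beta : R) (s : config) : R :=
  sumL L (fun x => rate L h beta s (flip_plus s x) + rate L h beta s (flip_minus s x)).

Definition jump_prob (L : nat) (h beta : R) (s s' : config) : R :=
  rate L h beta s s' / hold_rate L h beta s.

Definition n0 (h : R) : nat := Z.to_nat (Int_part (2 / h)).

Definition delta1 (L : nat) (h beta : R) : R :=
  exp (- h * beta) + sqrt (INR (L * L)) * exp (- (2 - h) * beta)
  + INR (L * L) * exp (- (4 - h) * beta).

Definition inRect (L a b l1 l2 : nat) (x : site) : Prop :=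
  exists i j, (i < l1)%nat /\ (j < l2)%nat /\
    x = (((a + i) mod L)%nat, ((b + j) mod L)%nat).

Definition isCorner (L a b l1 l2 : nat) (c : site) : Prop :=
  exists i j, (i = 0 \/ i = l1 - 1)%nat /\ (j = 0 \/ j = l2 - 1)%nat /\
    c = (((a + i) mod L)%nat, ((b + j) mod L)%nat).

Definition n_zero_nbrs (L : nat) (s : config) (x : site) : nat :=
  length (filter (fun w => Z.eqb (s w) 0) (nbrs L x)).

From Stdlib Require Import Reals ZArith List Lra Lia Classical FinFun.
Import ListNotations.

(* The rates are [exp (-beta [dH]_+)], so a move has rate 1 iff it does not raise the energy.
   Here exactly two moves are downhill: emptying the protuberance [z], which has at most one
   zero neighbour ([dH <= h - 2]), and filling the notch [y] next to both [z] and the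
   rectangle, which has two zero neighbours ([dH = -h]).  Every other move costs at least [h]
   (removing one of the four corners of the rectangle), at least [2 - h] (on the O(L) sites
   of the rows and columns bordering the rectangle), or at least [4 - h].  Hence the holding
   rate is [2 + O(delta1)] and both jump probabilities are [1 / 2 + O(delta1)].
   The geometry is done in coordinates relative to the corner [(a, b)] of the rectangle,
   where counting zero neighbours becomes linear arithmetic. *)

Open Scope R_scope.

(** * Sums over the torus *)

Definition lsum {A} (l : list A) (f : A -> R) : R := fold_right Rplus 0 (map f l).

Lemma lsum_nil {A} (f : A -> R) : lsum [] f = 0.
Proof. reflexivity. Qed.

Lemma lsum_cons {A} x (l : list A) f : lsum (x :: l) f = f x + lsum l f.
Proof. reflexivity. Qed.

Lemma lsum_ext {A} (l : list A) f g :
  (forall x, In x l -> f x = g x) -> lsum l f = lsum l g.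
Proof.
  induction l as [|x l IH]; intros Hfg; [reflexivity|]; rewrite !lsum_cons.
  rewrite Hfg, IH; auto with datatypes.
Qed.

Lemma lsum_le {A} (l : list A) f g :
  (forall x, In x l -> f x <= g x) -> lsum l f <= lsum l g.
Proof.
  induction l as [|x l IH]; intros Hfg; rewrite ?lsum_nil, ?lsum_cons; [lra|].
  apply Rplus_le_compat; auto with datatypes.
Qed.

Lemma lsum_nonneg {A} (l : list A) f : (forall x, In x l -> 0 <= f x) -> 0 <= lsum l f.
Proof.
  induction l as [|x l IH]; intros Hf; rewrite ?lsum_nil, ?lsum_cons; [lra|].
  apply Rplus_le_le_0_compat; auto with datatypes.
Qed.

Lemma lsum_plus {A} (l : list A) f g : lsum l (fun x => f x + g x) = lsum l f + lsum l g.
Proof. induction l as [|x l IH]; rewrite ?lsum_nil, ?lsum_cons; [lra|]. rewrite IH. lra. Qed.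

Lemma lsum_scal {A} (l : list A) c f : lsum l (fun x => c * f x) = c * lsum l f.
Proof. induction l as [|x l IH]; rewrite ?lsum_nil, ?lsum_cons; [lra|]. rewrite IH. lra. Qed.

Lemma lsum_const {A} (l : list A) c : lsum l (fun _ => c) = INR (length l) * c.
Proof.
  induction l as [|x l IH]; rewrite ?lsum_nil, ?lsum_cons; [cbn; lra|].
  rewrite IH; cbn [length]. rewrite S_INR. lra.
Qed.

Lemma lsum_comm {A B} (l : list A) (m : list B) (g : A -> B -> R) :
  lsum l (fun x => lsum m (g x)) = lsum m (fun y => lsum l (fun x => g x y)).
Proof.
  induction l as [|x l IH]; rewrite ?lsum_nil, ?lsum_cons.
  - symmetry. rewrite (lsum_ext m _ (fun _ => 0)) by reflexivity. rewrite lsum_const. lra.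
  - rewrite IH. symmetry. apply (lsum_plus m (g x)).
Qed.

Lemma lsum_term_le {A} (l : list A) f x :
  In x l -> (forall y, In y l -> 0 <= f y) -> f x <= lsum l f.
Proof.
  induction l as [|y l IH]; intros Hx Hf; [destruct Hx|]; rewrite lsum_cons.
  assert (0 <= f y) by auto with datatypes.
  assert (0 <= lsum l f) by (apply lsum_nonneg; auto with datatypes).
  destruct Hx as [<-|Hx]; [lra|]. assert (f x <= lsum l f) by auto with datatypes. lra.
Qed.

Lemma site_eqb_spec x p : reflect (x = p) (site_eqb x p).
Proof.
  destruct x as [i j], p as [k l]; unfold site_eqb; cbn.
  destruct (Nat.eqb_spec i k), (Nat.eqb_spec j l); constructor; congruence.
Qed.

Definition kron (x p : site) : R := if site_eqb x p then 1 else 0.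

Lemma kron_nonneg x p : 0 <= kron x p.
Proof. unfold kron. destruct site_eqb; lra. Qed.

Lemma lsum_kron_notin l p : ~ In p l -> lsum l (fun x => kron x p) = 0.
Proof.
  induction l as [|x l IH]; intros Hp; rewrite ?lsum_nil, ?lsum_cons; [reflexivity|].
  unfold kron at 1. destruct (site_eqb_spec x p); [subst; now destruct Hp; left|].
  rewrite IH by auto with datatypes. lra.
Qed.

Lemma lsum_kron l p : NoDup l -> In p l -> lsum l (fun x => kron x p) = 1.
Proof.
  induction 1 as [|x l Hx Hl IH]; intros Hp; [destruct Hp|]; rewrite lsum_cons.
  unfold kron at 1. destruct (site_eqb_spec x p) as [<-|Hne].
  - rewrite lsum_kron_notin by assumption. lra.
  - destruct Hp as [->|Hp]; [contradiction|]. rewrite IH by assumption. lra.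
Qed.

Lemma NoDup_list_prod {A B} (l : list A) (m : list B) :
  NoDup l -> NoDup m -> NoDup (list_prod l m).
Proof.
  induction 1 as [|x l Hx Hl IH]; intros Hm; cbn; [constructor|].
  apply NoDup_app; auto.
  - apply Injective_map_NoDup; [intros y y' E; now inversion E|assumption].
  - intros [x' y] Hxy. apply in_map_iff in Hxy as [? [E _]]. inversion E; subst.
    rewrite in_prod_iff. tauto.
Qed.

Lemma in_sites L i j : In (i, j) (sites L) <-> (i < L)%nat /\ (j < L)%nat.
Proof. unfold sites. rewrite in_prod_iff, !in_seq. lia. Qed.

Lemma sumL_ext L f g : (forall x, In x (sites L) -> f x = g x) -> sumL L f = sumL L g.
Proof. exact (lsum_ext (sites L) f g). Qed.

Lemma sumL_le L f g : (forall x, In x (sites L) -> f x <= g x) -> sumL L f <= sumL L g.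
Proof. exact (lsum_le (sites L) f g). Qed.

Lemma sumL_plus L f g : sumL L (fun x => f x + g x) = sumL L f + sumL L g.
Proof. exact (lsum_plus (sites L) f g). Qed.

Lemma sumL_scal L c f : sumL L (fun x => c * f x) = c * sumL L f.
Proof. exact (lsum_scal (sites L) c f). Qed.

Lemma sumL_minus L f g : sumL L f - sumL L g = sumL L (fun x => f x - g x).
Proof.
  unfold Rminus. rewrite <- (Rmult_1_l (sumL L g)), Ropp_mult_distr_l, <- sumL_scal, <- sumL_plus.
  apply sumL_ext. intros; ring.
Qed.

Lemma sumL_const L c : sumL L (fun _ => c) = INR L * INR L * c.
Proof.
  change (lsum (sites L) (fun _ => c) = INR L * INR L * c).
  pose proof (length_prod (seq 0 L) (seq 0 L)) as E. rewrite length_seq in E.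
  change (length (sites L) = (L * L)%nat) in E. rewrite lsum_const, E, mult_INR. ring.
Qed.

Lemma sumL_kron L p : In p (sites L) -> sumL L (fun x => kron x p) = 1.
Proof. apply lsum_kron, NoDup_list_prod; apply seq_NoDup. Qed.

Definition multiplicity (Q : list site) (x : site) : R := lsum Q (kron x).

Lemma multiplicity_nonneg Q x : 0 <= multiplicity Q x.
Proof. apply lsum_nonneg. intros; apply kron_nonneg. Qed.

Lemma multiplicity_In Q x : In x Q -> 1 <= multiplicity Q x.
Proof.
  intros Hx. unfold multiplicity. replace 1 with (kron x x).
  - apply lsum_term_le; auto using kron_nonneg.
  - unfold kron. now destruct (site_eqb_spec x x).
Qed.

Lemma sumL_multiplicity L Q : incl Q (sites L) -> sumL L (multiplicity Q) = INR (length Q).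
Proof.
  intros HQ. unfold sumL, multiplicity. fold (lsum (sites L) (fun x => lsum Q (kron x))).
  rewrite lsum_comm, (lsum_ext Q _ (fun _ => 1)), lsum_const; [lra|].
  intros p Hp. apply sumL_kron, HQ, Hp.
Qed.

Open Scope nat_scope.

(** * Cyclic and relative coordinates *)

Definition tsucc (L u : nat) : nat := if u =? L - 1 then 0 else u + 1.
Definition tpred (L u : nat) : nat := if u =? 0 then L - 1 else u - 1.

Lemma succ_mod L u : u < L -> (u + 1) mod L = tsucc L u.
Proof.
  intros Hu. unfold tsucc. destruct (Nat.eqb_spec u (L - 1)) as [->|Hne].
  - replace (L - 1 + 1) with L by lia. apply Nat.Div0.mod_same.
  - apply Nat.mod_small. lia.
Qed.

Lemma pred_mod L u : u < L -> (u + L - 1) mod L = tpred L u.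
Proof.
  intros Hu. unfold tpred. destruct (Nat.eqb_spec u 0) as [->|Hne].
  - apply Nat.mod_small. lia.
  - replace (u + L - 1) with ((u - 1) + 1 * L) by lia.
    rewrite Nat.Div0.mod_add. apply Nat.mod_small. lia.
Qed.

Lemma tsucc_lt L u : u < L -> tsucc L u < L.
Proof. unfold tsucc. destruct (Nat.eqb_spec u (L - 1)); lia. Qed.

Lemma tpred_lt L u : u < L -> tpred L u < L.
Proof. unfold tpred. destruct (Nat.eqb_spec u 0); lia. Qed.

Lemma tsucc_eq_iff L u k : u < L -> k < L -> tsucc L u = k <-> u = tpred L k.
Proof.
  unfold tsucc, tpred. destruct (Nat.eqb_spec u (L - 1)), (Nat.eqb_spec k 0); lia.
Qed.

Lemma tsucc_neq L u : 2 <= L -> u < L -> tsucc L u <> u.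
Proof. unfold tsucc. destruct (Nat.eqb_spec u (L - 1)); lia. Qed.

Lemma nbrs_eq L i j : i < L -> j < L ->
  nbrs L (i, j) = [(tsucc L i, j); (tpred L i, j); (i, tsucc L j); (i, tpred L j)].
Proof. intros Hi Hj. cbn. now rewrite !succ_mod, !pred_mod. Qed.

Lemma nbrs_in_sites L x w : In x (sites L) -> In w (nbrs L x) -> In w (sites L).
Proof.
  destruct x as [i j]. rewrite in_sites. intros [Hi Hj]. rewrite nbrs_eq by assumption.
  intros Hw. repeat destruct Hw as [<-|Hw]; try destruct Hw;
    apply in_sites; auto using tsucc_lt, tpred_lt.
Qed.

Ltac nat_cases :=
  repeat (match goal with
          | H : context [Nat.eqb _ _] |- _ => revert H
          | H : context [Nat.ltb _ _] |- _ => revert H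
          | |- context [?a =? ?b] => destruct (Nat.eqb_spec a b)
          | |- context [?a <? ?b] => destruct (Nat.ltb_spec0 a b)
          end; cbn [andb]; try (exfalso; lia)); intros; lia.

Lemma mod_lt_double t L : t < 2 * L -> t mod L = if t <? L then t else t - L.
Proof.
  intros Ht. destruct (Nat.ltb_spec0 t L); [now apply Nat.mod_small|].
  replace t with ((t - L) + 1 * L) at 1 by lia.
  rewrite Nat.Div0.mod_add. apply Nat.mod_small. lia.
Qed.

Definition translate (L a t : nat) : nat := (a + t) mod L.

(* [(i - a) mod L]; adding [L] first avoids truncated subtraction. *)
Definition rel (L a i : nat) : nat := (i + L - a) mod L.

Section Relative.

Variables (L a : nat).
Hypothesis Ha : a < L.

Lemma rel_eq i : i < L -> rel L a i = if i + L - a <? L then i + L - a else i - a.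
Proof. intros Hi. unfold rel. rewrite mod_lt_double by lia. nat_cases. Qed.

Lemma translate_eq t : t < L -> translate L a t = if a + t <? L then a + t else a + t - L.
Proof. intros Ht. unfold translate. apply mod_lt_double. lia. Qed.

Lemma rel_lt i : i < L -> rel L a i < L.
Proof. intros Hi. rewrite rel_eq by assumption. nat_cases. Qed.

Lemma translate_lt t : translate L a t < L.
Proof. apply Nat.mod_upper_bound. lia. Qed.

Lemma rel_translate t : t < L -> rel L a (translate L a t) = t.
Proof.
  intros Ht. rewrite rel_eq by apply translate_lt. rewrite translate_eq by assumption. nat_cases.
Qed.

Lemma translate_rel i : i < L -> translate L a (rel L a i) = i.
Proof.
  intros Hi. rewrite translate_eq by now apply rel_lt. rewrite rel_eq by assumption. nat_cases.
Qed.

Lemma rel_inj i i' : i < L -> i' < L -> rel L a i = rel L a i' -> i = i'.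
Proof. intros Hi Hi' E. now rewrite <- (translate_rel i), <- (translate_rel i'), E. Qed.

Lemma rel_tsucc i : i < L -> rel L a (tsucc L i) = tsucc L (rel L a i).
Proof.
  intros Hi. rewrite !rel_eq by (try apply tsucc_lt; assumption). unfold tsucc. nat_cases.
Qed.

Lemma rel_tpred i : i < L -> rel L a (tpred L i) = tpred L (rel L a i).
Proof.
  intros Hi. rewrite !rel_eq by (try apply tpred_lt; assumption). unfold tpred. nat_cases.
Qed.

End Relative.

Lemma inRect_rel L a b l1 l2 i j : a < L -> b < L -> i < L -> j < L -> l1 <= L -> l2 <= L ->
  inRect L a b l1 l2 (i, j) <-> rel L a i < l1 /\ rel L b j < l2.
Proof.
  intros Ha Hb Hi Hj Hl1 Hl2. unfold inRect. split.
  - intros (i0 & j0 & Hi0 & Hj0 & E). injection E as -> ->.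
    fold (translate L a i0) (translate L b j0). rewrite !rel_translate by lia. lia.
  - intros [Hu Hv]. exists (rel L a i), (rel L b j).
    fold (translate L a (rel L a i)) (translate L b (rel L b j)).
    rewrite !translate_rel by assumption. auto.
Qed.

Open Scope R_scope.

(** * Energy change of a single spin flip *)

Section BondSum.

Variables (L : nat) (s : config) (p : site) (v : Z) (phi : Z -> Z -> R).
Variables (next prev : site -> site).
Hypothesis Hp : In p (sites L).
Hypothesis Hprev : In (prev p) (sites L).
Hypothesis next_iff : forall x, In x (sites L) -> next x = p <-> x = prev p.
Hypothesis next_p : next p <> p.

Lemma sumL_bond_update :
  sumL L (fun x => phi (update s p v x) (update s p v (next x)) - phi (s x) (s (next x))) =
  (phi v (s (next p)) - phi (s p) (s (next p))) + (phi (s (prev p)) v - phi (s (prev p)) (s p)).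
Proof.
  assert (Hpp : prev p <> p) by (intros E; apply next_p, next_iff; congruence).
  rewrite (sumL_ext L _ (fun x => (phi v (s (next p)) - phi (s p) (s (next p))) * kron x p
            + (phi (s (prev p)) v - phi (s (prev p)) (s p)) * kron x (prev p))).
  - rewrite sumL_plus, !sumL_scal, !sumL_kron by assumption. lra.
  - intros x Hx. unfold update, kron.
    destruct (site_eqb_spec x p) as [->|Hxp].
    + destruct (site_eqb_spec (next p) p); [contradiction|].
      destruct (site_eqb_spec p (prev p)); [congruence|]. lra.
    + destruct (site_eqb_spec (next x) p) as [Hn|Hn];
        destruct (site_eqb_spec x (prev p)) as [Hq|Hq].
      * rewrite Hn; subst x; lra.
      * exfalso. now apply Hq, next_iff.
      * exfalso. now apply Hn, next_iff.
      * lra.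
Qed.

End BondSum.

Definition east (L : nat) (x : site) : site := (((fst x + 1) mod L)%nat, snd x).
Definition west (L : nat) (x : site) : site := (((fst x + L - 1) mod L)%nat, snd x).
Definition north (L : nat) (x : site) : site := (fst x, ((snd x + 1) mod L)%nat).
Definition south (L : nat) (x : site) : site := (fst x, ((snd x + L - 1) mod L)%nat).

Definition bond (a b : Z) : R := IZR ((b - a) ^ 2).

Lemma Ham_bonds L h s : Ham L h s =
  sumL L (fun x => bond (s x) (s (east L x)) + bond (s x) (s (north L x)) - h * IZR (s x)).
Proof. apply sumL_ext. now intros [i j] _. Qed.

Lemma nbrs_compass L x : nbrs L x = [east L x; west L x; north L x; south L x].
Proof. now destruct x. Qed.

Lemma east_eq_iff L x p : (2 <= L)%nat -> In x (sites L) -> In p (sites L) ->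
  east L x = p <-> x = west L p.
Proof.
  destruct x as [i j], p as [k l]. rewrite !in_sites. intros HL [Hi Hj] [Hk Hl].
  unfold east, west; cbn. rewrite succ_mod, pred_mod by assumption.
  pose proof (tsucc_eq_iff L i k Hi Hk) as E.
  split; intros Ex; injection Ex as E1 E2; apply E in E1; congruence.
Qed.

Lemma north_eq_iff L x p : (2 <= L)%nat -> In x (sites L) -> In p (sites L) ->
  north L x = p <-> x = south L p.
Proof.
  destruct x as [i j], p as [k l]. rewrite !in_sites. intros HL [Hi Hj] [Hk Hl].
  unfold north, south; cbn. rewrite succ_mod, pred_mod by assumption.
  pose proof (tsucc_eq_iff L j l Hj Hl) as E.
  split; intros Ex; injection Ex as E1 E2; apply E in E2; congruence.
Qed.

Lemma sumL_update_spin L s p v : In p (sites L) ->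
  sumL L (fun x => IZR (update s p v x) - IZR (s x)) = IZR v - IZR (s p).
Proof.
  intros Hp. rewrite (sumL_ext L _ (fun x => (IZR v - IZR (s p)) * kron x p)).
  - rewrite sumL_scal, sumL_kron by assumption. ring.
  - intros x _. unfold update, kron. destruct (site_eqb_spec x p) as [->|]; ring.
Qed.

Lemma ham_update L h s p v : (2 <= L)%nat -> In p (sites L) ->
  Ham L h (update s p v) - Ham L h s =
  lsum (nbrs L p) (fun w => IZR ((s w - v) ^ 2) - IZR ((s w - s p) ^ 2)) - h * (IZR v - IZR (s p)).
Proof.
  intros HL Hp.
  assert (Hwest : In (west L p) (sites L))
    by (eapply nbrs_in_sites; [exact Hp|rewrite nbrs_compass; cbn; tauto]).
  assert (Hsouth : In (south L p) (sites L))
    by (eapply nbrs_in_sites; [exact Hp|rewrite nbrs_compass; cbn; tauto]).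
  assert (Heast : east L p <> p).
  { destruct p as [k l]. apply in_sites in Hp as [Hk Hl]. unfold east; cbn.
    rewrite succ_mod by assumption. intros E. inversion E. now apply (tsucc_neq L k). }
  assert (Hnorth : north L p <> p).
  { destruct p as [k l]. apply in_sites in Hp as [Hk Hl]. unfold north; cbn.
    rewrite succ_mod by assumption. intros E. inversion E. now apply (tsucc_neq L l). }
  set (s' := update s p v).
  rewrite !Ham_bonds, sumL_minus.
  rewrite (sumL_ext L _ (fun x => (bond (s' x) (s' (east L x)) - bond (s x) (s (east L x)))
     + (bond (s' x) (s' (north L x)) - bond (s x) (s (north L x)))
     + - h * (IZR (s' x) - IZR (s x)))) by (intros; ring).
  rewrite !sumL_plus, sumL_scal. unfold s'. rewrite sumL_update_spin by assumption.
  rewrite (sumL_bond_update L s p v bond (east L) (west L)),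
    (sumL_bond_update L s p v bond (north L) (south L))
    by auto using east_eq_iff, north_eq_iff.
  rewrite nbrs_compass, !lsum_cons, lsum_nil. unfold bond.
  rewrite !Z.pow_2_r, !mult_IZR, !minus_IZR. ring.
Qed.

Lemma length_nbrs L x : length (nbrs L x) = 4%nat.
Proof. now destruct x. Qed.

Lemma ham_update_two_valued L h s x v : (2 <= L)%nat -> In x (sites L) ->
  (forall w, In w (nbrs L x) -> s w = 0%Z \/ s w = (-1)%Z) ->
  let k := INR (n_zero_nbrs L s x) in
  Ham L h (update s x v) - Ham L h s =
  k * (IZR v ^ 2 - IZR (s x) ^ 2) + (4 - k) * ((1 + IZR v) ^ 2 - (1 + IZR (s x)) ^ 2)
  - h * (IZR v - IZR (s x)).
Proof.
  intros HL Hx Hn k. unfold k, n_zero_nbrs. rewrite ham_update by assumption.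
  rewrite nbrs_compass in *. rewrite !lsum_cons, lsum_nil.
  destruct (Hn (east L x)), (Hn (west L x)), (Hn (north L x)), (Hn (south L x));
    cbn [In filter]; try tauto; repeat match goal with E : s _ = _ |- _ => rewrite E; clear E end;
    cbn [filter Z.eqb length INR]; rewrite ?Z.pow_2_r, ?mult_IZR, ?minus_IZR; simpl IZR; ring.
Qed.

Lemma n_zero_nbrs_le4 L s x : (n_zero_nbrs L s x <= 4)%nat.
Proof. unfold n_zero_nbrs. rewrite <- (length_nbrs L x). apply filter_length_le. Qed.

Section FlipEnergy.

Variables (L : nat) (h : R) (s : config) (x : site).
Hypothesis HL : (2 <= L)%nat.
Hypothesis Hx : In x (sites L).
Hypothesis two_valued : forall w, In w (nbrs L x) -> s w = 0%Z \/ s w = (-1)%Z.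
Let k := INR (n_zero_nbrs L s x).

Lemma flip_energy_minus_spin : s x = (-1)%Z ->
  Ham L h (flip_plus s x) - Ham L h s = 4 - 2 * k - h /\
  Ham L h (flip_minus s x) - Ham L h s = 16 - 4 * k - 2 * h.
Proof.
  intros Hs. unfold flip_plus, flip_minus. rewrite !ham_update_two_valued by assumption.
  rewrite Hs. cbn. fold k. split; ring.
Qed.

Lemma flip_energy_zero_spin : s x = 0%Z ->
  Ham L h (flip_plus s x) - Ham L h s = 12 - 2 * k - h /\
  Ham L h (flip_minus s x) - Ham L h s = 2 * k - 4 + h.
Proof.
  intros Hs. unfold flip_plus, flip_minus. rewrite !ham_update_two_valued by assumption.
  rewrite Hs. cbn. fold k. split; ring.
Qed.

End FlipEnergy.

Lemma rate_pos L h beta s s' : 0 < rate L h beta s s'.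
Proof. apply exp_pos. Qed.

Lemma rate_downhill L h beta s s' : Ham L h s' - Ham L h s <= 0 -> rate L h beta s s' = 1.
Proof. intros H. unfold rate. rewrite Rmax_left, Rmult_0_r by lra. apply exp_0. Qed.

Lemma rate_le_exp L h beta s s' c : 0 <= beta -> c <= Ham L h s' - Ham L h s ->
  rate L h beta s s' <= exp (- c * beta).
Proof.
  intros Hb H. unfold rate.
  assert (Hle : - beta * Rmax 0 (Ham L h s' - Ham L h s) <= - c * beta)
    by (pose proof (Rmax_r 0 (Ham L h s' - Ham L h s)); nra).
  destruct (Rle_lt_or_eq_dec _ _ Hle) as [Hlt|Heq];
    [left; now apply exp_increasing|rewrite Heq; lra].
Qed.

Section DownhillFlips.

Variables (L : nat) (h beta : R) (s : config) (x : site).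
Hypothesis HL : (2 <= L)%nat.
Hypothesis Hh : 0 < h < 2.
Hypothesis Hx : In x (sites L).
Hypothesis two_valued : forall w, In w (nbrs L x) -> s w = 0%Z \/ s w = (-1)%Z.

Lemma rate_fill_two_zero_nbrs : s x = (-1)%Z -> n_zero_nbrs L s x = 2%nat ->
  rate L h beta s (flip_plus s x) = 1.
Proof.
  intros Hs Hk. apply rate_downhill.
  destruct (flip_energy_minus_spin L h s x HL Hx two_valued Hs) as [Dp _].
  rewrite Dp, Hk. simpl INR. lra.
Qed.

Lemma rate_empty_lonely : s x = 0%Z -> (n_zero_nbrs L s x <= 1)%nat ->
  rate L h beta s (flip_minus s x) = 1.
Proof.
  intros Hs Hk. apply rate_downhill.
  destruct (flip_energy_zero_spin L h s x HL Hx two_valued Hs) as [_ Dm].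
  apply le_INR in Hk. simpl INR in Hk. rewrite Dm. lra.
Qed.

End DownhillFlips.

Open Scope nat_scope.

(** * Zero neighbours near a rectangle, in relative coordinates *)

Definition b2n (b : bool) : nat := if b then 1 else 0.

Lemma b2n_andb b c : b2n (b && c) = b2n b * b2n c.
Proof. now destruct b, c. Qed.

Definition cyc_nbrs_below (L l u : nat) : nat := b2n (tsucc L u <? l) + b2n (tpred L u <? l).

Definition cyc_nbrs_at (L u w : nat) : nat := b2n (tsucc L u =? w) + b2n (tpred L u =? w).

Definition rect_nbrs (L l1 l2 u v : nat) : nat :=
  b2n (v <? l2) * cyc_nbrs_below L l1 u + b2n (u <? l1) * cyc_nbrs_below L l2 v.

Definition point_nbrs (L u v zu zv : nat) : nat :=
  b2n (v =? zv) * cyc_nbrs_at L u zu + b2n (u =? zu) * cyc_nbrs_at L v zv.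

Definition is_nbr (L u v zu zv : nat) : Prop :=
  (v = zv /\ (tsucc L u = zu \/ tpred L u = zu)) \/ (u = zu /\ (tsucc L v = zv \/ tpred L v = zv)).

(* Offsets at distance at most one from [L - 1] or [l], the two lines bordering [0, l). *)
Definition band_offsets (L l : nat) : list nat := [L - 2; L - 1; 0; l - 1; l; l + 1].

Definition near_boundary (L l1 l2 u v : nat) : Prop :=
  In u (band_offsets L l1) \/ In v (band_offsets L l2).

Definition is_rect_corner (l1 l2 u v : nat) : Prop := In u [0; l1 - 1] /\ In v [0; l2 - 1].

(* [(yu, yv)] is the empty site adjacent both to the protuberance [(zu, zv)] and to the
   rectangle [[0, l1) x [0, l2)]. *)
Definition notch (L l1 l2 zu zv yu yv : nat) : Prop :=
  ((zu = L - 1 \/ zu = l1) /\ ((zv = 0 /\ yv = 1) \/ (zv = l2 - 1 /\ yv = l2 - 2)) /\ yu = zu) \/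
  ((zv = L - 1 \/ zv = l2) /\ ((zu = 0 /\ yu = 1) \/ (zu = l1 - 1 /\ yu = l1 - 2)) /\ yv = zv).

Ltac unfold_torus := unfold cyc_nbrs_below, cyc_nbrs_at, tsucc, tpred, b2n in *.

Lemma band_offsets_near L l w u : 1 <= l -> l + 3 <= L -> u < L -> w = L - 1 \/ w = l ->
  u = w \/ tsucc L u = w \/ tpred L u = w -> In u (band_offsets L l).
Proof.
  intros Hl HlL Hu Hw Hnear. unfold band_offsets; cbn [In].
  destruct Hw as [->| ->], Hnear as [->|[Hs|Hp]]; try tauto; unfold tsucc, tpred in *.
  - destruct (Nat.eqb_spec u (L - 1)); [lia|left; lia].
  - destruct (Nat.eqb_spec u 0); [do 2 right; left; lia|lia].
  - destruct (Nat.eqb_spec u (L - 1)); [lia|do 3 right; left; lia].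
  - destruct (Nat.eqb_spec u 0); [lia|do 5 right; left; lia].
Qed.

Lemma cyc_nbrs_at_ge1_inv L u w : 1 <= cyc_nbrs_at L u w -> tsucc L u = w \/ tpred L u = w.
Proof. unfold cyc_nbrs_at, b2n. nat_cases. Qed.

Lemma cyc_nbrs_at_ge1 L u w : tsucc L u = w \/ tpred L u = w -> 1 <= cyc_nbrs_at L u w.
Proof. unfold cyc_nbrs_at, b2n. intros [<-|<-]; rewrite Nat.eqb_refl; lia. Qed.

Lemma point_nbrs_ge1_inv L u v zu zv : 1 <= point_nbrs L u v zu zv -> is_nbr L u v zu zv.
Proof.
  unfold point_nbrs, is_nbr. intros H.
  destruct (Nat.le_gt_cases 1 (cyc_nbrs_at L u zu)) as [Hu|Hu];
    destruct (Nat.eqb_spec v zv), (Nat.eqb_spec u zu); cbn [b2n] in H;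
    first [left; split; [assumption|apply cyc_nbrs_at_ge1_inv; lia]
          | right; split; [assumption|apply cyc_nbrs_at_ge1_inv; lia]
          | lia].
Qed.

Lemma point_nbrs_ge1 L u v zu zv : is_nbr L u v zu zv -> 1 <= point_nbrs L u v zu zv.
Proof.
  unfold point_nbrs, is_nbr. intros [[<- H]|[<- H]]; apply cyc_nbrs_at_ge1 in H;
    rewrite Nat.eqb_refl; cbn [b2n]; lia.
Qed.

Section Cycle.

Variable L : nat.
Hypothesis HL : 3 <= L.

Lemma cyc_nbrs_at_le1 u w : u < L -> cyc_nbrs_at L u w <= 1.
Proof. intros. unfold_torus. nat_cases. Qed.

Lemma cyc_nbrs_at_self u : u < L -> cyc_nbrs_at L u u = 0.
Proof. intros. unfold_torus. nat_cases. Qed.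

Lemma point_nbrs_le1 u v zu zv : u < L -> v < L -> point_nbrs L u v zu zv <= 1.
Proof.
  intros Hu Hv. unfold point_nbrs, b2n.
  pose proof (cyc_nbrs_at_le1 u zu Hu). pose proof (cyc_nbrs_at_le1 v zv Hv).
  destruct (Nat.eqb_spec v zv) as [<-|], (Nat.eqb_spec u zu) as [<-|]; try lia.
  rewrite !cyc_nbrs_at_self by assumption. lia.
Qed.

Lemma point_nbrs_self u v : u < L -> v < L -> point_nbrs L u v u v = 0.
Proof. intros. unfold point_nbrs. rewrite !cyc_nbrs_at_self by assumption. lia. Qed.

End Cycle.

Section Interval.

Variables (L l : nat).
Hypothesis Hl : 2 <= l.
Hypothesis HlL : l + 2 <= L.

Lemma cyc_nbrs_below_inside u : u < l ->
  1 <= cyc_nbrs_below L l u /\ (cyc_nbrs_below L l u = 1 -> u = 0 \/ u = l - 1).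
Proof. intros. unfold_torus. nat_cases. Qed.

Lemma cyc_nbrs_below_outside u : l <= u < L ->
  cyc_nbrs_below L l u <= 1 /\ (cyc_nbrs_below L l u = 1 -> u = l \/ u = L - 1).
Proof. intros. unfold_torus. nat_cases. Qed.

End Interval.

Section Rectangle.

Variables (L l1 l2 : nat).
Hypothesis Hl1 : 2 <= l1.
Hypothesis Hl2 : 2 <= l2.
Hypothesis HL1 : l1 + 3 <= L.
Hypothesis HL2 : l2 + 3 <= L.

Lemma rect_nbrs_inside u v : u < l1 -> v < l2 ->
  2 <= rect_nbrs L l1 l2 u v /\
  (rect_nbrs L l1 l2 u v = 2 -> is_rect_corner l1 l2 u v) /\
  (rect_nbrs L l1 l2 u v <= 3 -> near_boundary L l1 l2 u v).
Proof.
  intros Hu Hv. unfold rect_nbrs, is_rect_corner, near_boundary, band_offsets; cbn [In].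
  destruct (cyc_nbrs_below_inside L l1 Hl1 ltac:(lia) u Hu),
    (cyc_nbrs_below_inside L l2 Hl2 ltac:(lia) v Hv).
  replace (v <? l2) with true by (symmetry; now apply Nat.ltb_lt).
  replace (u <? l1) with true by (symmetry; now apply Nat.ltb_lt).
  cbn [b2n]. repeat split; intros; try lia.
Qed.

Definition on_side (u v : nat) : Prop :=
  ((u = L - 1 \/ u = l1) /\ v < l2) \/ ((v = L - 1 \/ v = l2) /\ u < l1).

Lemma rect_nbrs_outside u v : u < L -> v < L -> ~ (u < l1 /\ v < l2) ->
  rect_nbrs L l1 l2 u v <= 1 /\ (rect_nbrs L l1 l2 u v = 1 -> on_side u v).
Proof.
  intros Hu Hv Hout. unfold rect_nbrs, on_side.
  destruct (Nat.ltb_spec0 u l1), (Nat.ltb_spec0 v l2); cbn [b2n]; try tauto.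
  - destruct (cyc_nbrs_below_outside L l2 Hl2 ltac:(lia) v ltac:(lia)). lia.
  - destruct (cyc_nbrs_below_outside L l1 Hl1 ltac:(lia) u ltac:(lia)). lia.
  - lia.
Qed.

Lemma on_side_near_boundary u v : on_side u v -> near_boundary L l1 l2 u v.
Proof. unfold on_side, near_boundary, band_offsets; cbn [In]. lia. Qed.

Section Notch.

Variables (zu zv yu yv : nat).
Hypothesis Hnotch : notch L l1 l2 zu zv yu yv.

Ltac notch_cases :=
  destruct Hnotch as [[[-> | ->] [[[-> ->]|[-> ->]] ->]] | [[-> | ->] [[[-> ->]|[-> ->]] ->]]].

Lemma notch_spec :
  zu < L /\ zv < L /\ yu < L /\ yv < L /\ ~ (zu < l1 /\ zv < l2) /\ ~ (yu < l1 /\ yv < l2) /\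
  ~ (yu = zu /\ yv = zv) /\ 1 <= rect_nbrs L l1 l2 yu yv /\ is_nbr L yu yv zu zv.
Proof. unfold rect_nbrs, is_nbr. unfold_torus. notch_cases; nat_cases. Qed.

Lemma nbr_of_notch_near_boundary u v : u < L -> v < L ->
  is_nbr L u v zu zv -> near_boundary L l1 l2 u v.
Proof.
  intros Hu Hv Hnbr. unfold near_boundary.
  assert ((zu = L - 1 \/ zu = l1) \/ (zv = L - 1 \/ zv = l2)) as [Hz|Hz]
    by (unfold notch in Hnotch; tauto);
    [left; apply (band_offsets_near L l1 zu)|right; apply (band_offsets_near L l2 zv)]; try lia;
    unfold is_nbr in Hnbr; tauto.
Qed.

Lemma nbr_of_notch_on_side u v : u < L -> v < L ->
  is_nbr L u v zu zv -> on_side u v -> u = yu /\ v = yv.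
Proof.
  intros Hu Hv Hnbr Hside. unfold on_side in Hside. unfold is_nbr, tsucc, tpred in Hnbr.
  notch_cases; destruct Hnbr as [[-> Hn]|[-> Hn]]; destruct Hside as [[Hs ?]|[Hs ?]]; nat_cases.
Qed.

End Notch.

Lemma notch_exists zu zv cu cv : zu < L -> zv < L -> ~ (zu < l1 /\ zv < l2) ->
  is_rect_corner l1 l2 cu cv -> is_nbr L zu zv cu cv -> exists yu yv, notch L l1 l2 zu zv yu yv.
Proof.
  unfold is_rect_corner, notch; cbn [In].
  intros Hzu Hzv Hout [Hcu Hcv] [[<- Hu]|[<- Hv]].
  - assert (Hz : zu = L - 1 \/ zu = l1)
      by (unfold tsucc, tpred in Hu; destruct Hcu as [<-|[<-|[]]], Hcv as [<-|[<-|[]]]; nat_cases).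
    destruct Hcv as [<-|[<-|[]]]; [exists zu, 1 | exists zu, (l2 - 2)]; left; auto.
  - assert (Hz : zv = L - 1 \/ zv = l2)
      by (unfold tsucc, tpred in Hv; destruct Hcu as [<-|[<-|[]]], Hcv as [<-|[<-|[]]]; nat_cases).
    destruct Hcu as [<-|[<-|[]]]; [exists 1, zv | exists (l1 - 2), zv]; right; auto.
Qed.

End Rectangle.

Lemma length_filter4 {A} (f : A -> bool) w1 w2 w3 w4 :
  length (filter f [w1; w2; w3; w4]) = b2n (f w1) + b2n (f w2) + b2n (f w3) + b2n (f w4).
Proof. cbn. now destruct (f w1), (f w2), (f w3), (f w4). Qed.

Definition band_sites (L a b l1 l2 : nat) : list site :=
  list_prod (map (translate L a) (band_offsets L l1)) (seq 0 L) ++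
  list_prod (seq 0 L) (map (translate L b) (band_offsets L l2)).

Definition corner_sites (L a b l1 l2 : nat) : list site :=
  list_prod (map (translate L a) [0; l1 - 1]) (map (translate L b) [0; l2 - 1]).

Lemma length_band_sites L a b l1 l2 : length (band_sites L a b l1 l2) = 12 * L.
Proof.
  unfold band_sites. rewrite length_app, !length_prod, !length_map, length_seq.
  cbn [band_offsets length]. lia.
Qed.

Lemma length_corner_sites L a b l1 l2 : length (corner_sites L a b l1 l2) = 4.
Proof. reflexivity. Qed.

Section SiteLists.

Variables (L a b l1 l2 : nat).
Hypothesis Ha : a < L.
Hypothesis Hb : b < L.

Lemma band_sites_incl : incl (band_sites L a b l1 l2) (sites L).
Proof.
  intros [i j] Hij. apply in_sites. unfold band_sites in Hij.
  apply in_app_or in Hij as [Hij|Hij]; apply in_prod_iff in Hij as [Hi Hj];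
    [apply in_map_iff in Hi as (t & <- & _); apply in_seq in Hj
    |apply in_map_iff in Hj as (t & <- & _); apply in_seq in Hi];
    split; try lia; now apply translate_lt.
Qed.

Lemma corner_sites_incl : incl (corner_sites L a b l1 l2) (sites L).
Proof.
  intros [i j] Hij. apply in_sites. unfold corner_sites in Hij.
  apply in_prod_iff in Hij as [Hi Hj].
  apply in_map_iff in Hi as (t & <- & _). apply in_map_iff in Hj as (t' & <- & _).
  split; now apply translate_lt.
Qed.

Lemma In_band_sites i j : i < L -> j < L ->
  near_boundary L l1 l2 (rel L a i) (rel L b j) -> In (i, j) (band_sites L a b l1 l2).
Proof.
  intros Hi Hj Hnb. unfold band_sites. apply in_or_app.
  destruct Hnb as [Hu|Hv]; [left|right]; apply in_prod; try (apply in_seq; lia);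
    apply in_map_iff; eexists; (split; [|eassumption]); now apply translate_rel.
Qed.

Lemma In_corner_sites i j : i < L -> j < L ->
  is_rect_corner l1 l2 (rel L a i) (rel L b j) -> In (i, j) (corner_sites L a b l1 l2).
Proof.
  intros Hi Hj [Hu Hv]. unfold corner_sites. apply in_prod;
    apply in_map_iff; eexists; (split; [|eassumption]); now apply translate_rel.
Qed.

End SiteLists.

(** * The rectangle with a protuberance *)

Section RectangleWithProtuberance.

Variables (L a b l1 l2 zi zj yu yv : nat) (s : config).
Hypothesis Ha : a < L.
Hypothesis Hb : b < L.
Hypothesis Hl1 : 2 <= l1.
Hypothesis Hl2 : 2 <= l2.
Hypothesis HL1 : l1 + 3 <= L.
Hypothesis HL2 : l2 + 3 <= L.
Hypothesis Hzi : zi < L.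
Hypothesis Hzj : zj < L.
Hypothesis Hz_out : ~ inRect L a b l1 l2 (zi, zj).
Hypothesis Hs : forall x, In x (sites L) ->
  ((inRect L a b l1 l2 x \/ x = (zi, zj)) -> s x = 0%Z) /\
  (~ (inRect L a b l1 l2 x \/ x = (zi, zj)) -> s x = (-1)%Z).
Hypothesis Hnotch : notch L l1 l2 (rel L a zi) (rel L b zj) yu yv.

Let zu := rel L a zi.
Let zv := rel L b zj.
Let y : site := (translate L a yu, translate L b yv).

Lemma spin_values w : In w (sites L) -> s w = 0%Z \/ s w = (-1)%Z.
Proof.
  intros Hw. destruct (Hs w Hw) as [H0 H1].
  destruct (classic (inRect L a b l1 l2 w \/ w = (zi, zj))); auto.
Qed.

Lemma site_eq_rel i j : i < L -> j < L -> (i, j) = (zi, zj) <-> rel L a i = zu /\ rel L b j = zv.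
Proof.
  intros Hi Hj. split.
  - intros E. now injection E as -> ->.
  - intros [Ei Ej]. f_equal; [apply (rel_inj L a) | apply (rel_inj L b)]; assumption.
Qed.

Lemma spin_zero_iff i j : i < L -> j < L ->
  s (i, j) = 0%Z <-> (rel L a i < l1 /\ rel L b j < l2) \/ (rel L a i = zu /\ rel L b j = zv).
Proof.
  intros Hi Hj. rewrite <- site_eq_rel, <- inRect_rel by lia.
  destruct (Hs (i, j)) as [H0 H1]; [now apply in_sites|].
  split; [|assumption]. intros E. apply NNPP. intros Hn.
  rewrite H1 in E by assumption. discriminate.
Qed.

Lemma zero_spin_indicator i j : i < L -> j < L ->
  b2n (Z.eqb (s (i, j)) 0) =
  b2n ((rel L a i <? l1) && (rel L b j <? l2)) + b2n ((rel L a i =? zu) && (rel L b j =? zv)).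
Proof.
  intros Hi Hj. pose proof (spin_zero_iff i j Hi Hj) as E.
  assert (Hzr : ~ (zu < l1 /\ zv < l2))
    by (unfold zu, zv; rewrite <- inRect_rel by lia; exact Hz_out).
  destruct (Z.eqb_spec (s (i, j)) 0) as [H|H]; rewrite ?E in H;
    destruct (Nat.ltb_spec0 (rel L a i) l1), (Nat.ltb_spec0 (rel L b j) l2),
      (Nat.eqb_spec (rel L a i) zu), (Nat.eqb_spec (rel L b j) zv); cbn; try reflexivity;
    exfalso; try (apply H; rewrite E); tauto || lia.
Qed.

Lemma n_zero_nbrs_rel i j : i < L -> j < L ->
  n_zero_nbrs L s (i, j) =
  rect_nbrs L l1 l2 (rel L a i) (rel L b j) + point_nbrs L (rel L a i) (rel L b j) zu zv.
Proof.
  intros Hi Hj. unfold n_zero_nbrs. rewrite nbrs_eq, length_filter4 by assumption.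
  rewrite !zero_spin_indicator by auto using tsucc_lt, tpred_lt.
  rewrite !rel_tsucc, !rel_tpred by assumption.
  unfold rect_nbrs, point_nbrs, cyc_nbrs_below, cyc_nbrs_at. rewrite !b2n_andb. ring.
Qed.

Lemma z_zero_nbrs : n_zero_nbrs L s (zi, zj) <= 1.
Proof.
  rewrite n_zero_nbrs_rel, point_nbrs_self by (try apply rel_lt; lia).
  rewrite Nat.add_0_r. refine (proj1 (rect_nbrs_outside L l1 l2 Hl1 Hl2 HL1 HL2 _ _ _ _ _));
    [apply rel_lt; lia..|]. rewrite <- inRect_rel by lia. exact Hz_out.
Qed.

Lemma notch_in_sites : In y (sites L).
Proof. apply in_sites. split; apply translate_lt; assumption. Qed.

Lemma notch_rel : rel L a (fst y) = yu /\ rel L b (snd y) = yv.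
Proof.
  destruct (notch_spec L l1 l2 Hl1 Hl2 HL1 HL2 _ _ _ _ Hnotch) as (_ & _ & Hyu & Hyv & _).
  split; apply rel_translate; assumption.
Qed.

Lemma notch_spin : s y = (-1)%Z.
Proof.
  destruct (notch_spec L l1 l2 Hl1 Hl2 HL1 HL2 _ _ _ _ Hnotch)
    as (_ & _ & _ & _ & _ & Hout & Hne & _).
  destruct notch_rel as [Eu Ev]. pose proof notch_in_sites as Hy.
  destruct y as [i j] eqn:Ey. apply in_sites in Hy as [Hi Hj]. cbn in Eu, Ev.
  destruct (spin_values (i, j)) as [E|E]; [now apply in_sites| |assumption].
  apply spin_zero_iff in E; [|assumption..]. fold zu zv in Hne. lia.
Qed.

Lemma notch_zero_nbrs : n_zero_nbrs L s y = 2.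
Proof.
  destruct (notch_spec L l1 l2 Hl1 Hl2 HL1 HL2 _ _ _ _ Hnotch)
    as (_ & _ & Hyu & Hyv & _ & Hout & _ & Hside & Hnbr).
  destruct notch_rel as [Eu Ev]. pose proof notch_in_sites as Hy.
  destruct y as [i j] eqn:Ey. apply in_sites in Hy as [Hi Hj]. cbn in Eu, Ev.
  rewrite n_zero_nbrs_rel, Eu, Ev by assumption.
  pose proof (rect_nbrs_outside L l1 l2 Hl1 Hl2 HL1 HL2 yu yv Hyu Hyv Hout).
  pose proof (point_nbrs_le1 L ltac:(lia) yu yv zu zv Hyu Hyv).
  pose proof (point_nbrs_ge1 L yu yv zu zv Hnbr). lia.
Qed.

Lemma minus_site_zero_nbrs i j : i < L -> j < L -> (i, j) <> (zi, zj) -> (i, j) <> y ->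
  s (i, j) = (-1)%Z ->
  n_zero_nbrs L s (i, j) <= 1 /\
  (n_zero_nbrs L s (i, j) = 1 -> near_boundary L l1 l2 (rel L a i) (rel L b j)).
Proof.
  intros Hi Hj Hz Hy Hm. set (u := rel L a i). set (v := rel L b j).
  assert (Hu : u < L) by now apply rel_lt. assert (Hv : v < L) by now apply rel_lt.
  assert (Hout : ~ (u < l1 /\ v < l2)).
  { intros Hin. assert (s (i, j) = 0%Z) by (apply spin_zero_iff; auto). congruence. }
  destruct (rect_nbrs_outside L l1 l2 Hl1 Hl2 HL1 HL2 u v Hu Hv Hout) as [Hr Hside].
  pose proof (point_nbrs_le1 L ltac:(lia) u v zu zv Hu Hv) as Hc.
  assert (Hnot_both : ~ (rect_nbrs L l1 l2 u v = 1 /\ point_nbrs L u v zu zv = 1)).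
  { intros [Hr1 Hc1]. apply Hy. unfold y.
    destruct (nbr_of_notch_on_side L l1 l2 Hl1 Hl2 HL1 HL2 _ _ _ _ Hnotch u v Hu Hv
                (point_nbrs_ge1_inv L u v zu zv ltac:(lia)) (Hside Hr1)) as [<- <-].
    unfold u, v. now rewrite !translate_rel. }
  rewrite n_zero_nbrs_rel by assumption. fold u v. split; [lia|]. intros Hk.
  destruct (Nat.eq_dec (rect_nbrs L l1 l2 u v) 1) as [Hr1|Hr0].
  - now apply on_side_near_boundary, Hside.
  - apply (nbr_of_notch_near_boundary L l1 l2 Hl1 Hl2 HL1 HL2 _ _ _ _ Hnotch); try assumption.
    apply (point_nbrs_ge1_inv L u v zu zv). lia.
Qed.

Lemma zero_site_zero_nbrs i j : i < L -> j < L -> (i, j) <> (zi, zj) -> s (i, j) = 0%Z ->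
  let k := n_zero_nbrs L s (i, j) in
  2 <= k /\ (k = 2 -> is_rect_corner l1 l2 (rel L a i) (rel L b j)) /\
  (k <= 3 -> near_boundary L l1 l2 (rel L a i) (rel L b j)).
Proof.
  intros Hi Hj Hz H0 k. unfold k. rewrite n_zero_nbrs_rel by assumption.
  apply (spin_zero_iff i j Hi Hj) in H0 as [[Hu Hv]|Hzr]; [|now apply site_eq_rel in Hzr].
  destruct (rect_nbrs_inside L l1 l2 Hl1 Hl2 HL1 HL2 _ _ Hu Hv) as (H2 & Hc & Hb').
  split; [lia|split; intros; [apply Hc|apply Hb']; lia].
Qed.

Lemma two_valued_nbrs x : In x (sites L) -> forall w, In w (nbrs L x) -> s w = 0%Z \/ s w = (-1)%Z.
Proof. intros Hx w Hw. apply spin_values. eapply nbrs_in_sites; eassumption. Qed.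

Lemma notch_ne_z : y <> (zi, zj).
Proof.
  destruct (notch_spec L l1 l2 Hl1 Hl2 HL1 HL2 _ _ _ _ Hnotch) as (_ & _ & _ & _ & _ & _ & Hne & _).
  destruct notch_rel as [Eu Ev]. intros E. rewrite E in Eu, Ev. apply Hne. cbn in Eu, Ev. auto.
Qed.

Lemma z_in_sites : In (zi, zj) (sites L).
Proof. now apply in_sites. Qed.

Lemma z_spin : s (zi, zj) = 0%Z.
Proof. apply (Hs _ z_in_sites). now right. Qed.

Local Open Scope R_scope.

Variables (h beta : R).
Hypothesis Hh : 0 < h < 1.
Hypothesis Hbeta : 0 < beta.

Let band := band_sites L a b l1 l2.
Let corners := corner_sites L a b l1 l2.

Definition cost_bound (x : site) : R :=
  exp (- (4 - h) * beta) + exp (- (2 - h) * beta) * multiplicity band x + exp (- h * beta) * multiplicity corners x.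

Lemma cost_bound_ge x : exp (- (4 - h) * beta) <= cost_bound x.
Proof.
  unfold cost_bound. pose proof (exp_pos (- (2 - h) * beta)). pose proof (exp_pos (- h * beta)).
  pose proof (multiplicity_nonneg band x). pose proof (multiplicity_nonneg corners x). nra.
Qed.

(* Away from [z] and [y] every flip costs at least [4 - h], except [2 - h] near the
   boundary of the rectangle and [h] (removing a corner) at its corners. *)
Lemma rate_le_cost_bound x s' : let d := Ham L h s' - Ham L h s in
  4 - h <= d \/ (2 - h <= d /\ In x band) \/ (h <= d /\ In x corners) ->
  rate L h beta s s' <= cost_bound x.
Proof.
  intros d Hd. unfold cost_bound.
  pose proof (exp_pos (- (4 - h) * beta)).
  pose proof (exp_pos (- (2 - h) * beta)). pose proof (exp_pos (- h * beta)).
  pose proof (Rmult_le_pos _ _ (Rlt_le _ _ (exp_pos (- (2 - h) * beta))) (multiplicity_nonneg band x)).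
  pose proof (Rmult_le_pos _ _ (Rlt_le _ _ (exp_pos (- h * beta))) (multiplicity_nonneg corners x)).
  destruct Hd as [Hd|[[Hd Hx]|[Hd Hx]]]; try apply multiplicity_In in Hx.
  - pose proof (rate_le_exp L h beta s s' _ ltac:(lra) Hd). lra.
  - pose proof (rate_le_exp L h beta s s' _ ltac:(lra) Hd).
    pose proof (Rmult_le_compat_l (exp (- (2 - h) * beta)) _ _ ltac:(lra) Hx). lra.
  - pose proof (rate_le_exp L h beta s s' _ ltac:(lra) Hd).
    pose proof (Rmult_le_compat_l (exp (- h * beta)) _ _ ltac:(lra) Hx). lra.
Qed.

Lemma other_site_rates x : In x (sites L) -> x <> (zi, zj) -> x <> y ->
  rate L h beta s (flip_plus s x) <= cost_bound x /\
  rate L h beta s (flip_minus s x) <= cost_bound x.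
Proof.
  intros Hx Hz Hy. pose proof (two_valued_nbrs x Hx) as Hval.
  destruct x as [i j]. pose proof Hx as Hij. apply in_sites in Hij as [Hi Hj].
  pose proof (n_zero_nbrs_le4 L s (i, j)).
  destruct (spin_values _ Hx) as [S|S].
  - destruct (zero_site_zero_nbrs i j Hi Hj Hz S) as (K2 & Kc & Kb).
    destruct (flip_energy_zero_spin L h s (i, j) ltac:(lia) Hx Hval S) as [Dp Dm].
    assert (n_zero_nbrs L s (i, j) = 2 \/ n_zero_nbrs L s (i, j) = 3 \/
            n_zero_nbrs L s (i, j) = 4)%nat
      as [K|[K|K]] by lia; rewrite K in Dp, Dm; simpl INR in Dp, Dm;
      split; apply rate_le_cost_bound; rewrite ?Dp, ?Dm.
    + left; lra.
    + right; right. split; [lra|]. apply In_corner_sites, Kc; assumption.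
    + left; lra.
    + right; left. split; [lra|]. apply In_band_sites, Kb; [assumption..|lia].
    + left; lra.
    + left; lra.
  - destruct (minus_site_zero_nbrs i j Hi Hj Hz Hy S) as [K1 Kb].
    destruct (flip_energy_minus_spin L h s (i, j) ltac:(lia) Hx Hval S) as [Dp Dm].
    assert (n_zero_nbrs L s (i, j) = 0 \/ n_zero_nbrs L s (i, j) = 1)%nat
      as [K|K] by lia; pose proof (Kb) as Kb'; rewrite K in Dp, Dm, Kb'; simpl INR in Dp, Dm;
      split; apply rate_le_cost_bound; rewrite ?Dp, ?Dm.
    + left; lra.
    + left; lra.
    + right; left. split; [lra|]. apply In_band_sites, Kb'; [assumption..|reflexivity].
    + left; lra.
Qed.

Lemma z_rates :
  rate L h beta s (flip_minus s (zi, zj)) = 1 /\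
  rate L h beta s (flip_plus s (zi, zj)) <= exp (- (4 - h) * beta).
Proof.
  pose proof (two_valued_nbrs _ z_in_sites) as Hval. split.
  - apply rate_empty_lonely; auto using z_spin, z_zero_nbrs, z_in_sites; [lia|split; lra].
  - destruct (flip_energy_zero_spin L h s _ ltac:(lia) z_in_sites Hval z_spin) as [Dp _].
    apply rate_le_exp; [lra|]. rewrite Dp.
    pose proof (le_INR _ _ z_zero_nbrs). simpl INR in *. lra.
Qed.

Lemma notch_rates :
  rate L h beta s (flip_plus s y) = 1 /\
  rate L h beta s (flip_minus s y) <= exp (- (4 - h) * beta).
Proof.
  pose proof (two_valued_nbrs _ notch_in_sites) as Hval. split.
  - apply rate_fill_two_zero_nbrs;
      auto using notch_spin, notch_zero_nbrs, notch_in_sites; [lia|split; lra].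
  - destruct (flip_energy_minus_spin L h s _ ltac:(lia) notch_in_sites Hval notch_spin) as [_ Dm].
    apply rate_le_exp; [lra|]. rewrite Dm, notch_zero_nbrs. simpl INR. lra.
Qed.

Let site_rate (x : site) : R := rate L h beta s (flip_plus s x) + rate L h beta s (flip_minus s x).

Lemma site_rate_bounds x : In x (sites L) ->
  multiplicity [(zi, zj); y] x <= site_rate x <= multiplicity [(zi, zj); y] x + 2 * cost_bound x.
Proof.
  intros Hx. unfold site_rate, multiplicity. rewrite !lsum_cons, lsum_nil. unfold kron.
  pose proof (rate_pos L h beta s (flip_plus s x)).
  pose proof (rate_pos L h beta s (flip_minus s x)).
  pose proof (cost_bound_ge x). pose proof (exp_pos (- (4 - h) * beta)).
  destruct (site_eqb_spec x (zi, zj)) as [->|Hz]; [|destruct (site_eqb_spec x y) as [->|Hy]].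
  - destruct (site_eqb_spec (zi, zj) y) as [E|_]; [now destruct notch_ne_z|].
    destruct z_rates. lra.
  - destruct notch_rates. lra.
  - destruct (other_site_rates x Hx Hz Hy). lra.
Qed.

Lemma hold_rate_bounds :
  2 <= hold_rate L h beta s <=
  2 + (2 * INR L * INR L * exp (- (4 - h) * beta) + 24 * INR L * exp (- (2 - h) * beta)
       + 8 * exp (- h * beta)).
Proof.
  assert (Hzy : incl [(zi, zj); y] (sites L))
    by (intros w [<-|[<-|[]]]; auto using z_in_sites, notch_in_sites).
  unfold hold_rate. fold site_rate. split.
  - eapply Rle_trans;
      [|apply (sumL_le L (multiplicity [(zi, zj); y])); intros x Hx; apply (site_rate_bounds x Hx)].
    rewrite (sumL_multiplicity L _ Hzy). cbn. lra.
  - eapply Rle_trans; [apply sumL_le; intros x Hx; apply (site_rate_bounds x Hx)|].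
    unfold cost_bound.
    rewrite (sumL_ext L _ (fun x => multiplicity [(zi, zj); y] x + (2 * exp (- (4 - h) * beta)
      + ((2 * exp (- (2 - h) * beta)) * multiplicity band x + (2 * exp (- h * beta)) * multiplicity corners x))))
      by (intros; ring).
    unfold band, corners.
    rewrite !sumL_plus, !sumL_scal, sumL_const, (sumL_multiplicity L _ Hzy),
      (sumL_multiplicity L _ (band_sites_incl L a b l1 l2 Ha Hb)),
      (sumL_multiplicity L _ (corner_sites_incl L a b l1 l2 Ha Hb)).
    rewrite length_band_sites, length_corner_sites, mult_INR.
    cbn [length INR]. lra.
Qed.

End RectangleWithProtuberance.

Open Scope R_scope.

Lemma n0_ge2 h : 0 < h < 1 -> (2 <= n0 h)%nat.
Proof.
  intros Hh. unfold n0, Int_part. destruct (archimed (2 / h)) as [Hup _].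
  assert (2 < 2 / h).
  { apply Rmult_lt_reg_r with h; [lra|]. unfold Rdiv. rewrite Rmult_assoc, Rinv_l by lra. lra. }
  assert (Hgt : (2 < up (2 / h))%Z) by (apply lt_IZR; lra). lia.
Qed.

Lemma notch_of_corner_nbr L a b l1 l2 zi zj c :
  (a < L)%nat -> (b < L)%nat -> (2 <= l1)%nat -> (2 <= l2)%nat ->
  (l1 + 3 <= L)%nat -> (l2 + 3 <= L)%nat -> (zi < L)%nat -> (zj < L)%nat ->
  ~ inRect L a b l1 l2 (zi, zj) -> isCorner L a b l1 l2 c -> adj L (zi, zj) c ->
  exists yu yv, notch L l1 l2 (rel L a zi) (rel L b zj) yu yv.
Proof.
  intros Ha Hb Hl1 Hl2 HL1 HL2 Hzi Hzj Hout (i & j & Hi & Hj & ->) Hadj.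
  apply (notch_exists L l1 l2 Hl1 Hl2 HL1 HL2 _ _ i j); try (apply rel_lt; lia).
  - rewrite <- inRect_rel by lia. exact Hout.
  - unfold is_rect_corner; cbn [In]. lia.
  - unfold adj in Hadj. rewrite nbrs_eq in Hadj by assumption.
    fold (translate L a i) (translate L b j) in Hadj.
    rewrite <- (rel_translate L a Ha i), <- (rel_translate L b Hb j) by lia.
    unfold is_nbr. cbn [In] in Hadj.
    destruct Hadj as [E|[E|[E|[E|[]]]]]; injection E as <- <-;
      rewrite ?rel_tsucc, ?rel_tpred by assumption; tauto.
Qed.

Lemma jump_prob_near_half L h beta s s' E :
  rate L h beta s s' = 1 -> 2 <= hold_rate L h beta s <= 2 + E ->
  Rabs (jump_prob L h beta s s' - 1 / 2) <= E / 4.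
Proof.
  intros Hr [Hlo Hhi]. unfold jump_prob. rewrite Hr.
  set (H := hold_rate L h beta s) in *.
  assert (Hq : 1 / H * H = 1) by (field; lra).
  assert (0 < 1 / H) by (apply Rdiv_lt_0_compat; lra).
  apply Rabs_le. split; nra.
Qed.

Lemma delta1_eq L h beta :
  delta1 L h beta = exp (- h * beta) + INR L * exp (- (2 - h) * beta)
                    + INR L * INR L * exp (- (4 - h) * beta).
Proof. unfold delta1. now rewrite mult_INR, sqrt_square by apply pos_INR. Qed.

Lemma update_zero_flip_minus s x : s x = 0%Z -> update s x (-1) = flip_minus s x.
Proof. intros Hs. unfold flip_minus. now rewrite Hs. Qed.

Lemma update_minus_flip_plus s x : s x = (-1)%Z -> update s x 0 = flip_plus s x.
Proof. intros Hs. unfold flip_plus. now rewrite Hs. Qed.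

Theorem mainTheorem16 (h : R) :
  0 < h < 1 ->
  (forall k : Z, 2 / h <> IZR k) ->
  exists C0 : R,
  forall (L n m : nat) (s : config) (a b l1 l2 : nat) (z : site) (beta : R),
    (n0 h <= m)%nat -> (m <= n)%nat -> (n + 3 <= L)%nat ->
    0 < beta ->
    ((l1 = n /\ l2 = m) \/ (l1 = m /\ l2 = n)) ->
    (a < L)%nat -> (b < L)%nat ->
    In z (sites L) -> ~ inRect L a b l1 l2 z ->
    (exists c, isCorner L a b l1 l2 c /\ inRect L a b l1 l2 c /\ adj L z c /\
       forall y, inRect L a b l1 l2 y -> adj L z y -> y = c) ->
    (forall x, In x (sites L) ->
       ((inRect L a b l1 l2 x \/ x = z) -> s x = 0%Z) /\
       (~ (inRect L a b l1 l2 x \/ x = z) -> s x = (-1)%Z)) ->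
    Rabs (jump_prob L h beta s (update s z (-1)%Z) - 1 / 2) <= C0 * delta1 L h beta
    /\
    (forall y, In y (sites L) -> s y = (-1)%Z -> n_zero_nbrs L s y = 2%nat ->
       Rabs (jump_prob L h beta s (update s y 0%Z) - 1 / 2) <= C0 * delta1 L h beta).
Proof.
  intros Hh _. exists 6.
  intros L n m s a b l1 l2 [zi zj] beta Hm Hmn HnL Hbeta Hl Ha Hb Hz Hout
    [c (Hc & _ & Hadj & _)] Hs.
  pose proof (n0_ge2 h Hh) as Hn0.
  assert (Hl1 : (2 <= l1)%nat) by lia. assert (Hl2 : (2 <= l2)%nat) by lia.
  assert (HL1 : (l1 + 3 <= L)%nat) by lia. assert (HL2 : (l2 + 3 <= L)%nat) by lia.
  apply in_sites in Hz as [Hzi Hzj].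
  destruct (notch_of_corner_nbr L a b l1 l2 zi zj c) as (yu & yv & Hnotch); try assumption.
  assert (Hclose : forall s', rate L h beta s s' = 1 ->
            Rabs (jump_prob L h beta s s' - 1 / 2) <= 6 * delta1 L h beta).
  { intros s' Hr. eapply Rle_trans.
    - apply jump_prob_near_half; [exact Hr|].
      exact (hold_rate_bounds L a b l1 l2 zi zj yu yv s Ha Hb Hl1 Hl2 HL1 HL2 Hzi Hzj Hout Hs
               Hnotch h beta Hh Hbeta).
    - rewrite delta1_eq. pose proof (pos_INR L).
      pose proof (exp_pos (- h * beta)). pose proof (exp_pos (- (2 - h) * beta)).
      pose proof (exp_pos (- (4 - h) * beta)). nra. }
  split.
  - rewrite update_zero_flip_minus by exact (z_spin L a b l1 l2 zi zj s Hzi Hzj Hs).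
    apply Hclose.
    exact (proj1 (z_rates L a b l1 l2 zi zj s Ha Hb Hl1 Hl2 HL1 HL2 Hzi Hzj Hout Hs h beta Hh Hbeta)).
  - intros x Hx Hxs Hk. rewrite update_minus_flip_plus by assumption.
    apply Hclose, rate_fill_two_zero_nbrs; try assumption; [lia|lra|].
    exact (two_valued_nbrs L a b l1 l2 zi zj s Hs x Hx).
Qed.
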